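(* Let $X$ be a real Banach space and $A:X\rightrightarrows X^*$ maximal monotone with $\mathcal{F}_A=\{F_A\}$. Then for every $w\in\mathrm{dom}(A)$, $v^*\in\mathrm{Im}(A)$, $x\in X$ and $x^*\in X^*$: (i) $F_A(x,v^* )=g_{A,v^*}^*(x)=P_A(x,v^* )$; (ii) $F_A(w,x^* )=f_{A,w}^*(x^* )=P_A(w,x^* )$.
   Context: A representative function of $A$ is a proper convex lsc $h$ on $X\times X^*$ with $h(x,x^* )\ge\langle x,x^*\rangle$ everywhere and equality on $\mathrm{Gr}(A)$; $\mathcal{F}_A$ is the set of all of them. $F_A(x,x^* )=\sup_{(y,y^* )\in\mathrm{Gr}(A)}\{\langle y,x^*\rangle+\langle x,y^*\rangle-\langle y,y^*\rangle\}$. With $\phi(x,x^* )=\langle x,x^*\rangle$ on $\mathrm{Gr}(A)$ and $+\infty$ elsewhere, $P_A$ is the restriction to $X\times X^*$ of $\phi^{**}$. $f_{A,w}(x)=\inf_{a^*\in X^*}\{P_A(x,a^* )-\langle w,a^*\rangle\}$, $g_{A,v^*}(x^* )=\inf_{a\in X}\{P_A(a,x^* )-\langle a,v^*\rangle\}$, with conjugates $f_{A,w}^*(x^* )=\sup_{y\in X}\{\langle y,x^*\rangle-f_{A,w}(y)\}$ and $g_{A,v^*}^*(x)=\sup_{y^*\in X^*}\{\langle x,y^*\rangle-g_{A,v^*}(y^* )\}$. *)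

From HB Require Import structures.
From mathcomp Require Import all_boot all_order all_algebra.
From mathcomp Require Import all_classical all_reals all_analysis.
Set Implicit Arguments. Unset Strict Implicit. Unset Printing Implicit Defensive.
Import Order.TTheory GRing.Theory Num.Theory.
Local Open Scope classical_set_scope.
Local Open Scope ring_scope.

Section MonotoneDefs.
Context {R : realType} {X : normedModType R}.

(* Xdual : bounded (= continuous) linear functionals on X, as functions X -> R *)
Definition is_dual (f : X -> R) : Prop :=
  (forall (a : R) (x y : X), f (a *: x + y) = a * f x + f y) /\
  exists C : R, forall x : X, `|f x| <= C * `|x|.

Definition dual_norm (f : X -> R) : R :=
  sup [set `|f x| | x in [set x : X | `|x| <= 1]].

Definition is_bidual (F : (X -> R) -> R) : Prop :=
  (forall (a : R) (f g : X -> R), is_dual f -> is_dual g ->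
      F (fun z => a * f z + g z) = a * F f + F g) /\
  exists C : R, forall f, is_dual f -> `|F f| <= C * dual_norm f.

(* a multivalued operator A : X ==> Xdual, given by its graph: A x xs <-> xs \in A x *)
Definition is_multi (A : X -> set (X -> R)) : Prop :=
  forall x, A x `<=` is_dual.

Definition monotone_op (A : X -> set (X -> R)) : Prop :=
  forall x y xs ys, A x xs -> A y ys -> 0 <= xs x - xs y - ys x + ys y.

Definition maximal_monotone (A : X -> set (X -> R)) : Prop :=
  [/\ is_multi A, monotone_op A &
    forall B : X -> set (X -> R), is_multi B -> monotone_op B ->
      (forall x xs, A x xs -> B x xs) -> forall x xs, B x xs -> A x xs].

Definition graph (A : X -> set (X -> R)) : set (X * (X -> R)) :=
  [set p | A p.1 p.2].

Definition fitzpatrick (A : X -> set (X -> R)) (x : X) (xs : X -> R) : \bar R :=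
  ereal_sup [set (p.2 x + xs p.1 - p.2 p.1)%:E | p in graph A].

Definition phiA (A : X -> set (X -> R)) (x : X) (xs : X -> R) : \bar R :=
  if `[< A x xs >] then (xs x)%:E else +oo%E.

Definition conjXXs (h : X -> (X -> R) -> \bar R) (ys : X -> R) (yss : (X -> R) -> R)
  : \bar R :=
  ereal_sup [set ((ys p.1 + yss p.2)%:E - h p.1 p.2)%E
            | p in [set p : X * (X -> R) | is_dual p.2]].

(* P_A : restriction to X x dual (canonically embedded in bidual x tridual) of the biconjugate of phiA *)
Definition P_A (A : X -> set (X -> R)) (x : X) (xs : X -> R) : \bar R :=
  ereal_sup [set ((p.1 x + p.2 xs)%:E - conjXXs (phiA A) p.1 p.2)%E
            | p in [set p : (X -> R) * ((X -> R) -> R) | is_dual p.1 /\ is_bidual p.2]].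

Definition f_Aw (A : X -> set (X -> R)) (w : X) (x : X) : \bar R :=
  ereal_inf [set (P_A A x a - (a w)%:E)%E | a in is_dual].

Definition g_Avs (A : X -> set (X -> R)) (vs : X -> R) (xs : X -> R) : \bar R :=
  ereal_inf [set (P_A A a xs - (vs a)%:E)%E | a in [set: X]].

Definition f_Aw_conj (A : X -> set (X -> R)) (w : X) (xs : X -> R) : \bar R :=
  ereal_sup [set ((xs y)%:E - f_Aw A w y)%E | y in [set: X]].

Definition g_Avs_conj (A : X -> set (X -> R)) (vs : X -> R) (x : X) : \bar R :=
  ereal_sup [set ((ys x)%:E - g_Avs A vs ys)%E | ys in is_dual].

Definition proper_fun (h : X -> (X -> R) -> \bar R) : Prop :=
  (forall x xs, is_dual xs -> h x xs != -oo%E) /\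
  (exists x xs, is_dual xs /\ h x xs != +oo%E).

Definition convex_fun (h : X -> (X -> R) -> \bar R) : Prop :=
  forall (x y : X) (xs ys : X -> R) (l : R), is_dual xs -> is_dual ys -> 0 < l < 1 ->
    let u := (l *: x + (1 - l) *: y)%R in
    let us := (fun z => l * xs z + (1 - l) * ys z)%R in
    (h u us <= l%:E * h x xs + (1 - l)%:E * h y ys)%E.

Definition lsc_fun (h : X -> (X -> R) -> \bar R) : Prop :=
  forall x xs, is_dual xs -> forall t : R, (t%:E < h x xs)%E ->
    exists2 d : R, 0 < d & forall y ys, is_dual ys -> `|y - x| < d ->
      dual_norm (fun z => ys z - xs z) < d -> (t%:E < h y ys)%E.

Definition representative (A : X -> set (X -> R)) (h : X -> (X -> R) -> \bar R) : Prop :=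
  [/\ proper_fun h, convex_fun h, lsc_fun h,
      (forall x xs, is_dual xs -> ((xs x)%:E <= h x xs)%E) &
      (forall x xs, A x xs -> h x xs = (xs x)%:E)].

(* F_A = {F_A}: the set of representative functions is exactly {F_A}
   (functions compared on X x Xdual) *)
Definition unique_representative (A : X -> set (X -> R)) : Prop :=
  representative A (fitzpatrick A) /\
  forall h, representative A h -> forall x xs, is_dual xs -> h x xs = fitzpatrick A x xs.

End MonotoneDefs.

(* P_A, the biconjugate of the function equal to xs x on the graph of A and
   +oo elsewhere, is itself a representative function of A: testing its
   defining supremum at the evaluation functionals gives the Fenchel-Young type
   bound  ys x + xs a - F_A a ys <= P_A x xs,  hence F_A <= P_A, so P_A
   dominates the pairing; it is below the pairing on the graph; and as a
   supremum of continuous affine functions it is convex and lower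
   semicontinuous.  Uniqueness of the representative gives P_A = F_A.  Finally
   the conjugate of g_{A,vs} at x is a supremum over pairs (ys, a) which is at
   least F_A x vs (take (a, ys) in the graph) and at most P_A x vs (by the
   Fenchel-Young bound); likewise for f_{A,w}. *)

From mathcomp Require Import all_boot all_order all_algebra.
From mathcomp Require Import all_classical all_reals all_analysis.
From mathcomp Require Import ring lra.
Import Order.TTheory GRing.Theory Num.Theory.
Local Open Scope classical_set_scope.
Local Open Scope ring_scope.

Section ExtendedReals.
Context {R : realType}.
Local Open Scope ereal_scope.

Lemma ereal_sup_sub_inf (I J : Type) (D : set I) (E : set J)
    (u : I -> R) (l : J -> R) (Q : I -> J -> \bar R) :
  ereal_sup [set (u i)%:E - ereal_inf [set Q i j - (l j)%:E | j in E] | i in D] =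
  ereal_sup [set (u k.1 + l k.2)%:E - Q k.1 k.2 | k in D `*` E].
Proof.
set S := ereal_sup [set _ | k in D `*` E].
have ubS i j : D i -> E j -> (u i + l j)%:E - Q i j <= S.
  by move=> Di Ej; apply: ereal_sup_ubound; exists (i, j).
apply/le_anti/andP; split.
  apply: ge_ereal_sup => _ [i Di <-].
  case: S ubS => [s| |] ubS; last 2 first.
  - exact: leey.
  - have -> : ereal_inf [set Q i j - (l j)%:E | j in E] = +oo.
      apply/eqP; rewrite eq_le leey /=; apply/ereal_infP => _ [j Ej <-].
      by have := ubS i j Di Ej; case: (Q i j) => [q| |] //=; rewrite leeNy_eq.
    by rewrite /= addeNy.
  have : (u i - s)%:E <= ereal_inf [set Q i j - (l j)%:E | j in E].
    apply/ereal_infP => _ [j Ej <-].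
    have := ubS i j Di Ej; case: (Q i j) => [q| |] //=; rewrite ?leey //.
    by rewrite -!EFinB !lee_fin => ?; lra.
  by case: (ereal_inf _) => [m| |] //=; rewrite -?EFinB ?lee_fin ?leNye // => ?; lra.
apply: ge_ereal_sup => _ [[i j] [/= Di Ej] <-].
apply: le_trans (_ : (u i)%:E - (Q i j - (l j)%:E) <= _); last first.
  apply: le_trans (ereal_sup_ubound _); last by exists i.
  by apply: leeB => //; apply: ereal_inf_lbound; exists j.
by rewrite fin_num_oppeB // (addeC (- _)) addeA EFinD.
Qed.

End ExtendedReals.

Section Duality.
Context {R : realType} {X : normedModType R}.
Implicit Types (x y : X) (f g xs ys zs : X -> R) (F yss : (X -> R) -> R).

Lemma dual0 {f} : is_dual f -> f 0 = 0.
Proof. by move=> [L _]; have := L 1 0 0; rewrite scaler0 addr0 mul1r; lra. Qed.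

Lemma dualZ {f} a x : is_dual f -> f (a *: x) = a * f x.
Proof. by move=> hf; have := hf.1 a x 0; rewrite addr0 (dual0 hf) addr0. Qed.

Lemma dualD {f} x y : is_dual f -> f (x + y) = f x + f y.
Proof. by move=> hf; have := hf.1 1 x y; rewrite scale1r mul1r. Qed.

Lemma dualB {f} x y : is_dual f -> f (x - y) = f x - f y.
Proof. by move=> hf; rewrite dualD // -scaleN1r dualZ // mulN1r. Qed.

Lemma dual_bounded {f} : is_dual f -> exists2 C, 0 <= C & forall x, `|f x| <= C * `|x|.
Proof.
move=> [_ [C HC]]; exists (Num.max C 0) => [|x]; first by rewrite le_max lexx orbT.
by apply: le_trans (HC x) _; rewrite ler_wpM2r // le_max lexx.
Qed.

Lemma dual_comb {f g} a b : is_dual f -> is_dual g -> is_dual (fun z => a * f z + b * g z).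
Proof.
move=> hf hg; split=> [c x y|]; first by rewrite !dualD // !dualZ //; ring.
have [Cf _ Hf] := dual_bounded hf; have [Cg _ Hg] := dual_bounded hg.
exists (`|a| * Cf + `|b| * Cg) => x.
apply: le_trans (ler_normD _ _) _; rewrite !normrM mulrDl -!mulrA.
by apply: lerD; apply: ler_wpM2l.
Qed.

Lemma dual_norm_ub {f} x : is_dual f -> `|x| <= 1 -> `|f x| <= dual_norm f.
Proof.
move=> hf hx; have [C C0 HC] := dual_bounded hf.
apply: ub_le_sup; last by exists x.
exists C => _ [y hy <-]; apply: le_trans (HC y) _.
by rewrite -[leRHS]mulr1 ler_wpM2l.
Qed.

Lemma dual_norm_ge0 {f} : is_dual f -> 0 <= dual_norm f.
Proof. by move=> hf; apply: le_trans (dual_norm_ub 0 hf _); rewrite ?normr0. Qed.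

Lemma ler_dual_norm {f} x : is_dual f -> `|f x| <= `|x| * dual_norm f.
Proof.
move=> hf; have [->|x0] := eqVneq x 0; first by rewrite dual0 // !normr0 mul0r.
have nx : 0 < `|x| by rewrite normr_gt0.
have := dual_norm_ub (`|x|^-1 *: x) hf.
rewrite normrZ normfV normr_id mulVf ?gt_eqF // lexx => /(_ isT).
by rewrite dualZ // normrM normfV normr_id -ler_pdivrMl // mulrC.
Qed.

Lemma bidual_eval x : is_bidual (fun f : X -> R => f x).
Proof. by split=> //; exists `|x| => f hf; apply: ler_dual_norm. Qed.

Lemma bidual_comb {F f g} a b : is_bidual F -> is_dual f -> is_dual g ->
  F (fun z => a * f z + b * g z) = a * F f + b * F g.
Proof.
move=> [L _] hf hg.
have h0 : is_dual (fun _ : X => 0 : R).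
  by split=> [*|]; [rewrite mulr0 addr0 | exists 0 => x; rewrite normr0 mul0r].
have F0 : F (fun _ => 0) = 0.
  have := L 1 _ _ h0 h0; under eq_fun do rewrite mulr0 addr0; lra.
have hbg : is_dual (fun z => b * g z).
  by have := dual_comb 0 b hf hg; under eq_fun do rewrite mul0r add0r.
have FZ : F (fun z => b * g z) = b * F g.
  by have := L b _ _ hg h0; under eq_fun do rewrite addr0; rewrite F0 addr0.
by rewrite L // FZ.
Qed.

Lemma dual_bidual_lsc ys yss x xs e : is_dual ys -> is_bidual yss -> is_dual xs -> 0 < e ->
  exists2 d, 0 < d & forall y zs, is_dual zs -> `|y - x| < d ->
    dual_norm (fun z => zs z - xs z) < d -> ys x + yss xs - e < ys y + yss zs.
Proof.
move=> hys hyss hxs e0.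
have [C1 C10 HC1] := dual_bounded hys; have [C2 HC2] := hyss.2.
pose K := C1 + `|C2| + 1; have K0 : 0 < K by rewrite /K; have := normr_ge0 C2; lra.
pose d := e / (2 * K); have d0 : 0 < d by rewrite divr_gt0 // mulr_gt0.
have Kd : K * d = e / 2 by rewrite /d; field; rewrite gt_eqF.
exists d => // y zs hzs hy hd.
have zsE : (fun z => zs z - xs z) = (fun z => 1 * zs z + -1 * xs z).
  by apply: funext => z; ring.
have hdiff : is_dual (fun z => zs z - xs z) by rewrite zsE; apply: dual_comb.
have Bys : `|ys (y - x)| <= C1 * d.
  by apply: le_trans (HC1 _) _; rewrite ler_wpM2l // ltW.
have Byss : `|yss (fun z => zs z - xs z)| <= `|C2| * d.
  apply: le_trans (HC2 _ hdiff) _; apply: le_trans (ler_wpM2r _ (ler_norm C2)) _.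
    exact: dual_norm_ge0.
  by rewrite ler_wpM2l // ltW.
have CdK : C1 * d + `|C2| * d <= e / 2.
  by rewrite -Kd -mulrDl ler_wpM2r ?(ltW d0) // /K; lra.
move: Bys Byss; rewrite zsE (bidual_comb _ _ hyss hzs hxs) (dualB _ _ hys) !ler_norml.
by move=> /andP[+ _] /andP[+ _]; lra.
Qed.

End Duality.

Section PABounds.
Context {R : realType} {X : normedModType R}.
Variable A : X -> set (X -> R).
Implicit Types (x : X) (xs ys : X -> R) (yss : (X -> R) -> R).
Local Open Scope ereal_scope.

Lemma conj_phiA_eval_le_fitzpatrick ys a :
  conjXXs (phiA A) ys (fun f => f a) <= fitzpatrick A a ys.
Proof.
apply: ge_ereal_sup => _ [[b bs] /= hbs <-]; rewrite /phiA.
case: asboolP => [Abbs|_]; last by rewrite leNye.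
by apply: ereal_sup_ubound; exists (b, bs) => //=; rewrite -EFinB; congr EFin; ring.
Qed.

Lemma P_A_ge_affine ys yss x xs : is_dual ys -> is_bidual yss ->
  (ys x + yss xs)%:E - conjXXs (phiA A) ys yss <= P_A A x xs.
Proof. by move=> hys hyss; apply: ereal_sup_ubound; exists (ys, yss). Qed.

Lemma fenchel_young_P_A x xs ys a : is_dual ys ->
  (ys x + xs a)%:E - fitzpatrick A a ys <= P_A A x xs.
Proof.
move=> hys; apply: le_trans _ (P_A_ge_affine _ _ x xs hys (bidual_eval a)).
by apply: leeB => //; apply: conj_phiA_eval_le_fitzpatrick.
Qed.

Hypothesis hm : is_multi A.

Lemma fitzpatrick_le_P_A :
  (forall x xs, A x xs -> fitzpatrick A x xs = (xs x)%:E) ->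
  forall x xs, fitzpatrick A x xs <= P_A A x xs.
Proof.
move=> hg x xs; apply: ge_ereal_sup => _ [[b bs] /= hb <-].
by have := fenchel_young_P_A x xs bs b (hm _ _ hb); rewrite hg.
Qed.

Lemma conj_phiA_ge_graph ys yss w ws : A w ws ->
  (ys w + yss ws)%:E - (ws w)%:E <= conjXXs (phiA A) ys yss.
Proof.
move=> hw; apply: ereal_sup_ubound.
by exists (w, ws); [apply: hm _ _ hw | rewrite /phiA asboolT].
Qed.

Lemma P_A_le_pairing x xs : A x xs -> P_A A x xs <= (xs x)%:E.
Proof.
move=> hx; apply: ge_ereal_sup => _ [[ys yss] [hys hyss] <-] /=.
have := conj_phiA_ge_graph ys yss _ _ hx.
case: (conjXXs (phiA A) ys yss) => [c| |] //=; rewrite ?addeNy ?leNye // !lee_fin.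
by move=> ?; lra.
Qed.

End PABounds.

Section PARepresentative.
Context {R : realType} {X : normedModType R}.
Variables (A : X -> set (X -> R)) (w : X) (ws : X -> R).
Hypotheses (hm : is_multi A) (hF : representative A (fitzpatrick A)) (hw : A w ws).
Implicit Types (x : X) (xs ys : X -> R) (yss : (X -> R) -> R).
Local Open Scope ereal_scope.

Lemma pairing_le_P_A x xs : is_dual xs -> (xs x)%:E <= P_A A x xs.
Proof.
case: hF => _ _ _ Fge Fgraph hxs.
exact: le_trans (Fge _ _ hxs) (fitzpatrick_le_P_A A hm Fgraph x xs).
Qed.

Lemma P_A_graph x xs : A x xs -> P_A A x xs = (xs x)%:E.
Proof.
move=> hx; apply/le_anti/andP; split; first exact: P_A_le_pairing A hm x xs hx.
exact: pairing_le_P_A _ _ (hm _ _ hx).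
Qed.

Lemma conj_phiA_neq_Ny ys yss : conjXXs (phiA A) ys yss != -oo.
Proof.
by apply: contraTN (conj_phiA_ge_graph A hm ys yss _ _ hw) => /eqP ->; rewrite leeNy_eq.
Qed.

Lemma P_A_convex : convex_fun (P_A A).
Proof.
move=> x y xs ys l hxs hys /andP[l0 l1] /=.
have l'0 : (0 < 1 - l)%R by rewrite subr_gt0.
have Hx := fun zs zss => P_A_ge_affine A zs zss x xs.
have Hy := fun zs zss => P_A_ge_affine A zs zss y ys.
case: (P_A A x xs) Hx (pairing_le_P_A x xs hxs) => [px| |] Hx _ //;
  case: (P_A A y ys) Hy (pairing_le_P_A y ys hys) => [py| |] Hy _ //;
  rewrite ?gt0_muley ?lte_fin // -?EFinM ?addye ?addey ?leey //.
apply: ge_ereal_sup => _ [[zs zss] [/= hzs hzss] <-] /=.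
move: (Hx _ _ hzs hzss) (Hy _ _ hzs hzss) (conj_phiA_neq_Ny zs zss).
case: (conjXXs (phiA A) zs zss) => [c| |] //=; last by move=> _ _ _; rewrite addeNy leNye.
rewrite -!EFinD !lee_fin => Hx' Hy' _.
by rewrite (dualD _ _ hzs) !(dualZ _ _ hzs) (bidual_comb _ _ hzss hxs hys); nra.
Qed.

Lemma P_A_lsc : lsc_fun (P_A A).
Proof.
move=> x xs hxs t /ereal_sup_gt [_ [[ys yss] [/= hys hyss] <-] /= ht].
move: ht (P_A_ge_affine A ys yss) (conj_phiA_neq_Ny ys yss).
case: (conjXXs (phiA A) ys yss) => [c| |] //=.
rewrite -EFinD lte_fin => ht Hc _.
have [|d d0 Hd] := dual_bidual_lsc ys yss x xs (ys x + yss xs - c - t)%R hys hyss hxs.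
  by rewrite subr_gt0.
exists d => // y zs hzs hy hdist; apply: lt_le_trans (Hc y zs hys hyss).
by rewrite -EFinD lte_fin; have := Hd y zs hzs hy hdist; lra.
Qed.

Lemma P_A_representative : representative A (P_A A).
Proof.
split; [split | exact: P_A_convex | exact: P_A_lsc | exact: pairing_le_P_A |
  exact: P_A_graph].
  by move=> x xs hxs; apply: contraTN (pairing_le_P_A x xs hxs) => /eqP ->; rewrite leeNy_eq.
by exists w, ws; split; [exact: hm _ _ hw | rewrite P_A_graph].
Qed.

End PARepresentative.

Section Conjugates.
Context {R : realType} {X : normedModType R}.
Variable A : X -> set (X -> R).
Hypotheses (hm : is_multi A) (hF : representative A (fitzpatrick A)).
Local Open Scope ereal_scope.

Lemma g_Avs_conjE vs x : g_Avs_conj A vs x =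
  ereal_sup [set (k.1 x + vs k.2)%:E - P_A A k.2 k.1 | k in is_dual `*` [set: X]].
Proof. exact: (ereal_sup_sub_inf _ _ _ _ (fun ys => ys x) vs (fun ys a => P_A A a ys)). Qed.

Lemma f_Aw_conjE w xs : f_Aw_conj A w xs =
  ereal_sup [set (xs k.1 + k.2 w)%:E - P_A A k.1 k.2 | k in [set: X] `*` is_dual].
Proof. exact: (ereal_sup_sub_inf _ _ _ _ xs (fun a => a w) (P_A A)). Qed.

Lemma fitzpatrick_le_g_Avs_conj x vs : fitzpatrick A x vs <= g_Avs_conj A vs x.
Proof.
rewrite g_Avs_conjE; apply: ge_ereal_sup => _ [[b bs] /= hb <-].
have -> : (bs x + vs b - bs b)%:E = (bs x + vs b)%:E - P_A A b bs.
  by rewrite (P_A_graph A hm hF _ _ hb) EFinB.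
by apply: ereal_sup_ubound; exists (bs, b) => //; split=> //; apply: hm _ _ hb.
Qed.

Lemma fitzpatrick_le_f_Aw_conj w xs : fitzpatrick A w xs <= f_Aw_conj A w xs.
Proof.
rewrite f_Aw_conjE; apply: ge_ereal_sup => _ [[b bs] /= hb <-].
have -> : (bs w + xs b - bs b)%:E = (xs b + bs w)%:E - P_A A b bs.
  by rewrite (P_A_graph A hm hF _ _ hb) EFinB (addrC (bs w)).
by apply: ereal_sup_ubound; exists (b, bs) => //; split=> //; apply: hm _ _ hb.
Qed.

Hypothesis P_A_fitzpatrick :
  forall y ys, is_dual ys -> P_A A y ys = fitzpatrick A y ys.

Lemma g_Avs_conj_le_P_A x vs : g_Avs_conj A vs x <= P_A A x vs.
Proof.
rewrite g_Avs_conjE; apply: ge_ereal_sup => _ [[ys a] [/= hys _] <-].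
by rewrite P_A_fitzpatrick //; apply: fenchel_young_P_A.
Qed.

Lemma f_Aw_conj_le_P_A w xs : f_Aw_conj A w xs <= P_A A w xs.
Proof.
rewrite f_Aw_conjE; apply: ge_ereal_sup => _ [[y a] [_ /= ha] <-].
by rewrite P_A_fitzpatrick // (addrC (xs y)); apply: fenchel_young_P_A.
Qed.

End Conjugates.

Theorem corollary3p5 (R : realType) (X : completeNormedModType R)
  (A : X -> set (X -> R)) :
  maximal_monotone A -> unique_representative A ->
  forall (w : X) (vs : X -> R) (x : X) (xs : X -> R),
    (exists ws, A w ws) -> (exists u, A u vs) -> is_dual xs ->
    (fitzpatrick A x vs = g_Avs_conj A vs x /\ g_Avs_conj A vs x = P_A A x vs) /\
    (fitzpatrick A w xs = f_Aw_conj A w xs /\ f_Aw_conj A w xs = P_A A w xs).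
Proof.
move=> [hm _ _] [hF Funiq] w vs x xs [ws hw] [u hu] hxs.
have PF y ys : is_dual ys -> P_A A y ys = fitzpatrick A y ys.
  exact: Funiq (P_A_representative A w ws hm hF hw) y ys.
have hvs := hm _ _ hu.
suff [gP fP] : g_Avs_conj A vs x = P_A A x vs /\ f_Aw_conj A w xs = P_A A w xs.
  by rewrite gP fP !PF.
split; apply/le_anti/andP; split.
- exact: g_Avs_conj_le_P_A.
- by rewrite PF //; apply: fitzpatrick_le_g_Avs_conj.
- exact: f_Aw_conj_le_P_A.
- by rewrite PF //; apply: fitzpatrick_le_f_Aw_conj.
Qed.
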